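(* Let $G=\prod_{1\leq i\leq k}C_{p^{r_i}}$ be a finite non-cyclic abelian $p$-group with $r_1\geq r_2\geq\dots\geq r_k$ and $k\geq 2$. Then $\Delta_D(G)^*$ is disconnected if and only if $r_2=1$.
   Context: $C_n$ denotes the cyclic group of order $n$. The deep commuting graph $\Delta_D(G)$ has vertex set $G$, distinct vertices adjacent iff their preimages commute in a Schur cover $\tilde G$ of $G$ (a central extension $\{e\}\to M(G)\to\tilde G\to G\to\{e\}$ with kernel contained in $Z(\tilde G)\cap[\tilde G,\tilde G]$, of maximal order; $M(G)$ the Schur multiplier). A vertex is dominant if adjacent to every other vertex; the reduced graph $\Gamma^*$ is the subgraph induced by the non-dominant vertices. *)

From HB Require Import structures.
From mathcomp Require Import all_boot all_order all_fingroup all_solvable.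
Set Implicit Arguments. Unset Strict Implicit. Unset Printing Implicit Defensive.
Local Open Scope group_scope.

Definition stem_ext (gT hT : finGroupType) (G : {set gT}) (H : {group hT})
    (f : {morphism H >-> gT}) : Prop :=
  f @* H = G /\ 'ker f \subset 'Z(H) :&: H^`(1).

Definition schur_cover (gT hT : finGroupType) (G : {set gT}) (H : {group hT})
    (f : {morphism H >-> gT}) : Prop :=
  stem_ext G f /\
  forall (kT : finGroupType) (K : {group kT}) (g : {morphism K >-> gT}),
    stem_ext G g -> #|'ker g| <= #|'ker f|.

(* adjacency in the deep commuting graph (w.r.t. the cover f):
   distinct x, y in G are adjacent iff some (equivalently every) preimages commute *)
Definition deep_adj (gT hT : finGroupType) (G : {set gT}) (H : {group hT})
    (f : {morphism H >-> gT}) (x y : gT) : bool :=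
  [&& x \in G, y \in G, x != y &
   [exists x' in H, exists y' in H,
      [&& f x' == x, f y' == y & x' * y' == y' * x']]].

Definition dominant (gT hT : finGroupType) (G : {set gT}) (H : {group hT})
    (f : {morphism H >-> gT}) (v : gT) : bool :=
  (v \in G) && [forall w in G, (w != v) ==> deep_adj G f v w].

(* vertex set of the reduced graph *)
Definition nondominant (gT hT : finGroupType) (G : {set gT}) (H : {group hT})
    (f : {morphism H >-> gT}) : {set gT} :=
  [set v in G | ~~ dominant G f v].

Definition reduced_rel (gT hT : finGroupType) (G : {set gT}) (H : {group hT})
    (f : {morphism H >-> gT}) : rel gT :=
  [rel x y | [&& x \in nondominant G f, y \in nondominant G f & deep_adj G f x y]].

Definition reduced_disconnected (gT hT : finGroupType) (G : {set gT})
    (H : {group hT}) (f : {morphism H >-> gT}) : Prop :=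
  exists u v, [/\ u \in nondominant G f, v \in nondominant G f &
                  ~~ connect (reduced_rel G f) u v].

(* Write G = <a> x E with #[a] = p^r_1, and call x, y deep-commuting when
   their lifts to the Schur cover H commute.  For additive maps lam, mu from G
   to a finite ring R, twisting H by the bilinear cocycle lam(x) mu(y) gives a
   central extension of G; by maximality of H its derived subgroup is no larger
   than that of H, so the twisted commutator lam(x) mu(y) - lam(y) mu(x) of
   deep-commuting x, y vanishes for R = F_p, and p times it vanishes for
   R = Z/p^2 as soon as x^p and y deep-commute.
   If r_2 = 1, E is elementary abelian: the powers a^(kp) are dominant, while
   a^m with p not dividing m deep-commutes with nothing outside <a> (take lam
   the coordinate along a and mu a coordinate on E), so the non-dominant
   elements of <a> form a component.
   If r_2 >= 2, write E = <b> x E_2; the coordinates along a and b show that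
   a^p is not dominant, and every non-dominant x is joined to a^p: along
   x, x^p, x^(p^2), ... the last non-dominant power x' has x'^p dominant,
   hence deep-commuting with a, so x' deep-commutes with a^p. *)

From HB Require Import structures.
From mathcomp Require Import all_boot all_fingroup all_solvable all_algebra mxabelem.
Set Implicit Arguments. Unset Strict Implicit. Unset Printing Implicit Defensive.
Import GRing.Theory.
Local Open Scope group_scope.

Definition lifts_commute (gT hT : finGroupType) (H : {group hT})
    (f : {morphism H >-> gT}) (x y : gT) : Prop :=
  forall X Y, X \in H -> Y \in H -> f X = x -> f Y = y -> commute X Y.

Lemma der_sub_ker_abelian (aT rT : finGroupType) (D : {group aT})
    (phi : {morphism D >-> rT}) :
  abelian (phi @* D) -> D^`(1) \subset 'ker phi.
Proof.
move=> abD; rewrite ker_trivg_morphim der_sub /= morphim_der //.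
by move/derG1P: abD => ->.
Qed.

Section LiftsCommute.

Variables (gT hT : finGroupType) (G : {group gT}) (H : {group hT}).
Variable f : {morphism H >-> gT}.
Hypothesis hstem : stem_ext G f.

Lemma stem_ext_mem X : X \in H -> f X \in G.
Proof. by case: hstem => <- _ HX; apply: mem_morphim. Qed.

Lemma stem_ext_preim x : x \in G -> exists2 X, X \in H & f X = x.
Proof. by case: hstem => <- _ /morphimP[X HX _ ->]; exists X. Qed.

Lemma stem_ext_ker_cent X k : X \in H -> k \in 'ker f -> commute X k.
Proof.
move=> HX /(subsetP hstem.2); rewrite inE => /andP[/centerP[_ cHk] _].
exact/commute_sym/cHk.
Qed.

Lemma commute_lifts X Y :
  X \in H -> Y \in H -> commute X Y -> lifts_commute f (f X) (f Y).
Proof.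
move=> HX HY cXY X' Y' HX' HY' eX eY.
have ker_quo Z Z' : Z \in H -> Z' \in H -> f Z' = f Z -> Z^-1 * Z' \in 'ker f.
  move=> HZ HZ' eZ; apply/kerP; first by rewrite groupM ?groupV.
  by rewrite morphM ?groupV // morphV // eZ mulVg.
have kX := ker_quo _ _ HX HX' eX; have kY := ker_quo _ _ HY HY' eY.
have HkX : X^-1 * X' \in H by rewrite groupM ?groupV.
rewrite -(mulKVg X X') -(mulKVg Y Y').
apply: commuteM; apply/commute_sym; apply: commuteM.
- exact/commute_sym.
- exact: stem_ext_ker_cent.
- exact/commute_sym/stem_ext_ker_cent.
- exact/commute_sym/stem_ext_ker_cent.
Qed.

Lemma lifts_commute_sym x y : lifts_commute f x y -> lifts_commute f y x.
Proof. by move=> cxy X Y HX HY eX eY; apply/commute_sym/cxy. Qed.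

Lemma lifts_commuteX x m n : x \in G -> lifts_commute f (x ^+ m) (x ^+ n).
Proof.
case/stem_ext_preim=> X HX <-; rewrite -!morphX //.
by apply: commute_lifts; rewrite ?groupX //; apply: commuteX2.
Qed.

Lemma deep_adjP x y :
  deep_adj G f x y <-> [/\ x \in G, y \in G, x != y & lifts_commute f x y].
Proof.
split.
  case/and4P=> Gx Gy nxy /existsP[X /andP[HX /existsP[Y /andP[HY]]]].
  case/and3P=> /eqP eX /eqP eY /eqP cXY; split=> //.
  by rewrite -eX -eY; apply: commute_lifts.
case=> Gx Gy nxy cxy; rewrite /deep_adj Gx Gy nxy /=.
have [X HX eX] := stem_ext_preim Gx; have [Y HY eY] := stem_ext_preim Gy.
apply/existsP; exists X; rewrite HX; apply/existsP; exists Y.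
by rewrite HY eX eY !eqxx; apply/eqP/cxy.
Qed.

Lemma deep_adj_sym : symmetric (deep_adj G f).
Proof.
suff adjC x y : deep_adj G f x y -> deep_adj G f y x.
  by move=> x y; apply/idP/idP; apply: adjC.
case/deep_adjP=> Gx Gy nxy cxy.
by apply/deep_adjP; split; rewrite 1?eq_sym //; apply: lifts_commute_sym.
Qed.

Lemma reduced_rel_sym : symmetric (reduced_rel G f).
Proof. by move=> x y; rewrite /reduced_rel /= deep_adj_sym andbCA. Qed.

Lemma dominantP v :
  dominant G f v <-> v \in G /\ {in G, forall w, lifts_commute f v w}.
Proof.
split=> [/andP[Gv /forall_inP adj] | [Gv cv]].
  split=> // w Gw; have [-> | nwv] := eqVneq w v.
    by rewrite -[v]expg1; apply: lifts_commuteX.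
  by have /deep_adjP[] := implyP (adj w Gw) nwv.
rewrite /dominant Gv; apply/forall_inP=> w Gw; apply/implyP=> nwv.
by apply/deep_adjP; split; rewrite 1?eq_sym //; apply: cv.
Qed.

Lemma dominant1 : dominant G f 1.
Proof.
apply/dominantP; split=> [|w Gw]; first exact: group1.
by have := @lifts_commuteX w 0 1 Gw; rewrite expg0 expg1.
Qed.

Lemma connect_lifts_commute x y :
    x \in nondominant G f -> y \in nondominant G f -> lifts_commute f x y ->
  connect (reduced_rel G f) x y.
Proof.
move=> ndx ndy cxy; have [-> | nxy] := eqVneq x y; first exact: connect0.
apply: connect1; rewrite /reduced_rel /= ndx ndy; apply/deep_adjP.
by split=> //; [case/setIdP: ndx | case/setIdP: ndy].
Qed.

Hypothesis abG : abelian G.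

Lemma stem_ext_commg_ker X Y : X \in H -> Y \in H -> [~ X, Y] \in 'ker f.
Proof.
move=> HX HY; apply/kerP; first exact: groupR.
rewrite morphR //; apply/eqP/commgP.
exact: (centsP abG) (stem_ext_mem HX) _ (stem_ext_mem HY).
Qed.

Lemma stem_ext_der_abelian : H^`(1) = 'ker f.
Proof.
apply/eqP; rewrite eqEsubset der_sub_ker_abelian; last by case: hstem => ->.
by have [_] := hstem; rewrite subsetI => /andP[].
Qed.

Lemma lifts_commute_moveX x y n :
  x \in G -> y \in G -> lifts_commute f (x ^+ n) y -> lifts_commute f x (y ^+ n).
Proof.
case/stem_ext_preim=> X HX <-; case/stem_ext_preim=> Y HY <- cXnY.
rewrite -morphX //; apply: commute_lifts; rewrite ?groupX //.
have kXY := stem_ext_commg_ker HX HY.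
have cX := stem_ext_ker_cent HX kXY; have cY := stem_ext_ker_cent HY kXY.
apply/commgP; rewrite commgX // -commXg //; apply/commgP.
by apply: cXnY; rewrite ?groupX // morphX.
Qed.

End LiftsCommute.

Lemma schur_cover_der_le (gT hT kT : finGroupType) (G : {group gT})
    (H : {group hT}) (f : {morphism H >-> gT}) (T L : {group kT})
    (F : {morphism T >-> gT}) :
    schur_cover G f -> F @* T = G -> 'ker F \subset 'C(T) -> T^`(1) \subset 'ker F ->
    L \subset 'ker F -> L :&: T^`(1) = 1 -> (#|'ker F| <= #|T^`(1)| * #|L|)%N ->
  #|T^`(1)| <= #|'ker f|.
Proof.
set D := T^`(1) => hcov imF cTK sDK sLK tiLD leK.
have cardDL : #|D * L| = (#|D| * #|L|)%N by rewrite TI_cardMg // setIC.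
have defK : D * L = 'ker F.
  by apply/eqP; rewrite eqEcard mulG_subG sDK sLK cardDL.
have nLT : T \subset 'N(L).
  by apply/cents_norm; rewrite centsC (subset_trans sLK).
have sKq : 'ker (coset L) \subset 'ker F by rewrite ker_coset.
set g := factm_morphism sKq nLT.
have nLD : D \subset 'N(L) by rewrite (subset_trans (der_sub 1 T)).
have kerg : 'ker g = D / L by rewrite ker_factm -defK; apply: quotientMidr.
have cardKg : #|'ker g| = #|D|.
  by rewrite kerg card_quotient // -indexgI setIC tiLD indexg1.
rewrite -cardKg; apply: hcov.2; split; first by rewrite morphim_factm.
rewrite kerg subsetI -quotient_der // subxx andbT.
by rewrite subsetI quotientS ?quotient_cents ?(subset_trans sDK) ?subsetIl.
Qed.

Lemma morph_add1 (gT : finGroupType) (G : {group gT}) (R : zmodType) (m : gT -> R) :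
  {in G &, {morph m : x y / x * y >-> (x + y)%R}} -> m 1 = 0%R.
Proof.
by move=> mM; apply: (@addrI _ (m 1)); rewrite addr0 -mM ?mulg1.
Qed.

Record cocycle (K : finGroupType) (R : finZmodType) := Cocycle {
  cocycle_val :> K -> K -> R;
  cocycleA : forall u v w,
    (cocycle_val u v + cocycle_val (u * v) w = cocycle_val v w + cocycle_val u (v * w))%R;
  cocycle1l : forall u, cocycle_val 1 u = 0%R;
  cocycle1r : forall u, cocycle_val u 1 = 0%R }.

Definition cocycle_ext (K : finGroupType) (R : finZmodType) (c : cocycle K R) : Type :=
  (K * R)%type.

HB.instance Definition _ (K : finGroupType) (R : finZmodType) (c : cocycle K R) :=
  Finite.copy (cocycle_ext c) (K * R)%type.

Section CocycleExtension.

Variables (K : finGroupType) (R : finZmodType) (c : cocycle K R).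
Local Open Scope ring_scope.

Definition cext_mul (x y : cocycle_ext c) : cocycle_ext c :=
  ((x.1 * y.1)%g, x.2 + y.2 + c x.1 y.1).
Definition cext_one : cocycle_ext c := (1%g, 0).
Definition cext_inv (x : cocycle_ext c) : cocycle_ext c :=
  (x.1^-1%g, - x.2 - c x.1^-1%g x.1).

Lemma cext_mulA : associative cext_mul.
Proof.
move=> [x1 x2] [y1 y2] [z1 z2]; rewrite /cext_mul /=; congr (_, _).
  by rewrite mulgA.
rewrite !addrA (addrAC (x2 + y2)) -[RHS]addrA.
by rewrite (addrAC _ (c y1 z1) z2) -[LHS]addrA -cocycleA !addrA (addrAC _ z2).
Qed.

Lemma cext_mul1 : left_id cext_one cext_mul.
Proof. by move=> [x1 x2]; rewrite /cext_mul /= mul1g add0r cocycle1l addr0. Qed.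

Lemma cext_mulV : left_inverse cext_one cext_inv cext_mul.
Proof.
move=> [x1 x2]; rewrite /cext_mul /cext_one /= mulVg.
by congr (_, _); rewrite addrAC subrK addNr.
Qed.

End CocycleExtension.

HB.instance Definition _ (K : finGroupType) (R : finZmodType) (c : cocycle K R) :=
  Finite_isGroup.Build (cocycle_ext c) (@cext_mulA K R c) (@cext_mul1 K R c)
    (@cext_mulV K R c).

Lemma cext_mulE (K : finGroupType) (R : finZmodType) (c : cocycle K R)
    (x y : cocycle_ext c) :
  x * y = ((x.1 * y.1)%g, (x.2 + y.2 + c x.1 y.1)%R).
Proof. by []. Qed.

Section BilinearTwist.

Variables (gT hT : finGroupType) (G : {group gT}) (H : {group hT}).
Variable f : {morphism H >-> gT}.
Hypotheses (hcov : schur_cover G f) (abG : abelian G).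
Variables (R : finComNzRingType) (lam mu : gT -> R).
Hypothesis lamM : {in G &, {morph lam : x y / x * y >-> (x + y)%R}}.
Hypothesis muM : {in G &, {morph mu : x y / x * y >-> (x + y)%R}}.

Let hstem : stem_ext G f := hcov.1.
Local Notation fs u := (f (sgval u)).

Let fsG (u : subg_of H) : fs u \in G.
Proof. exact/stem_ext_mem/subgP. Qed.

Let fsM (u v : subg_of H) : fs (u * v) = fs u * fs v.
Proof. by rewrite /= morphM ?subgP. Qed.

Definition bilinear_twist_val (u v : subg_of H) : R := (lam (fs u) * mu (fs v))%R.

Lemma bilinear_twistA u v w :
  (bilinear_twist_val u v + bilinear_twist_val (u * v) w
   = bilinear_twist_val v w + bilinear_twist_val u (v * w))%R.
Proof.
by rewrite /bilinear_twist_val !fsM lamM ?muM ?fsG // mulrDl mulrDr addrA addrC.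
Qed.

Lemma bilinear_twist1l u : bilinear_twist_val 1 u = 0%R.
Proof. by rewrite /bilinear_twist_val morph1 (morph_add1 lamM) mul0r. Qed.

Lemma bilinear_twist1r u : bilinear_twist_val u 1 = 0%R.
Proof. by rewrite /bilinear_twist_val morph1 (morph_add1 muM) mulr0. Qed.

Definition bilinear_twist :=
  Cocycle bilinear_twistA bilinear_twist1l bilinear_twist1r.

Local Notation T := (cocycle_ext bilinear_twist).

Definition twist_cover (x : T) : gT := fs x.1.

Lemma twist_coverM : {in [set: T] &, {morph twist_cover : x y / x * y}}.
Proof. by move=> x y _ _; rewrite /twist_cover fsM. Qed.
Canonical twist_cover_morphism := Morphism twist_coverM.

Definition twist_proj (x : T) : subg_of H := x.1.

Lemma twist_projM : {in [set: T] &, {morph twist_proj : x y / x * y}}.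
Proof. by []. Qed.
Canonical twist_proj_morphism := Morphism twist_projM.

Lemma im_twist_cover : twist_cover @* [set: T] = G.
Proof.
apply/eqP; rewrite eqEsubset; apply/andP; split.
  by apply/subsetP=> _ /morphimP[x _ _ ->]; apply: fsG.
apply/subsetP=> _ /(stem_ext_preim hstem)[X HX <-]; apply/morphimP.
by exists ((subg H X, 0%R) : T); rewrite ?inE //= /twist_cover subgK.
Qed.

Lemma card_ker_twist_cover : #|'ker twist_cover| = (#|'ker f| * #|R|)%N.
Proof.
have cardT : #|[set: T]| = (#|H| * #|R|)%N.
  rewrite cardsT card_prod -[#|subg_of H|]cardsT.
  by rewrite -(card_injm (injm_sgval H)) ?subsetT // im_sgval.
have cardD (aT : finGroupType) (D : {group aT}) (phi : {morphism D >-> gT}) :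
    #|D| = (#|'ker phi| * #|phi @* D|)%N.
  by rewrite card_morphim setIid Lagrange ?subsetIl.
have := cardD _ [set: T]%G twist_cover_morphism; rewrite /= cardT im_twist_cover.
rewrite (cardD _ H f) hstem.1 mulnAC => /eqP.
by rewrite eqn_pmul2r ?cardG_gt0 // => /eqP.
Qed.

Lemma ker_twist_cover_cent : 'ker twist_cover \subset 'C([set: T]).
Proof.
apply/subsetP=> x /mker fx1; apply/centP=> y _.
have kx : sgval x.1 \in 'ker f by apply/kerP; [apply: subgP | apply: fx1].
have cxy : x.1 * y.1 = y.1 * x.1.
  by apply: val_inj; apply/commute_sym/(stem_ext_ker_cent hstem)/kx/subgP.
rewrite /commute !cext_mulE /= cxy /bilinear_twist_val.
by rewrite [fs x.1]fx1 (morph_add1 lamM) (morph_add1 muM) mul0r mulr0 (addrC x.2).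
Qed.

Lemma der_twist_sub_ker : [set: T]^`(1) \subset 'ker twist_cover.
Proof. by apply: der_sub_ker_abelian; rewrite im_twist_cover. Qed.

Lemma card_twist_proj_der : #|twist_proj @* [set: T]^`(1)| = #|'ker f|.
Proof.
rewrite morphim_der ?subsetT //.
have -> : twist_proj @* [set: T] = [set: subg_of H].
  apply/eqP; rewrite eqEsubset subsetT; apply/subsetP=> u _.
  by apply/morphimP; exists ((u, 0%R) : T); rewrite ?inE.
rewrite -(card_injm (injm_sgval H)) ?subsetT // morphim_der ?subsetT //.
by rewrite im_sgval (stem_ext_der_abelian hstem).
Qed.

Lemma twist_ker_expg (w : subg_of H) (t : R) n :
  fs w = 1 -> ((w, t) : T) ^+ n = (w ^+ n, (t *+ n)%R).
Proof.
move=> fw1; elim: n => [|n IHn]; first by rewrite !expg0 mulr0n.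
rewrite !expgS IHn cext_mulE /= /bilinear_twist_val fw1 (morph_add1 lamM).
by rewrite mul0r addr0 mulrS.
Qed.

Lemma twist_commg (u v : subg_of H) :
  [~ ((u, 0%R) : T), (v, 0%R)]
  = ([~ u, v], (bilinear_twist_val u v - bilinear_twist_val v u)%R).
Proof.
have fuv1 : fs [~ u, v] = 1.
  apply/mker; rewrite (morphR (sgval_morphism H)) ?in_setT //.
  by apply: (stem_ext_commg_ker hstem abG); apply: subgP.
apply: (@mulgI _ (((v, 0%R) : T) * (u, 0%R))); rewrite -commgC.
rewrite !cext_mulE /=; congr (_, _); first by rewrite -commgC.
rewrite /bilinear_twist_val fuv1 (morph_add1 muM).
by rewrite mulr0 !addr0 !add0r addrC subrK.
Qed.

(* Maximality of the cover: T / L is a stem extension of G whose kernel has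
   the order of T^`(1). *)
Lemma der_twist_central_eq0 (L : {group T}) s :
    L \subset 'ker twist_cover -> L :&: [set: T]^`(1) = 1 ->
    ((1%g, s) : T) \in [set: T]^`(1) -> (#|R| <= #|L| * #[(1%g, s) : T])%N ->
  s = 0%R.
Proof.
set D := [set: T]^`(1); set x : T := (1%g, s) => sLK tiLD Dx leR.
have cardD : (#|'ker f| * #[x] <= #|D|)%N.
  have idx : #|D : 'ker twist_proj| = #|'ker f|.
    by rewrite -card_twist_proj_der card_morphim setTI.
  rewrite -(LagrangeI D ('ker twist_proj)) idx mulnC leq_mul2r orbC.
  rewrite subset_leq_card // cycle_subG inE Dx /=.
  by apply/kerP; rewrite ?inE.
have leKD : (#|'ker twist_cover| <= #|D| * #|L|)%N.
  rewrite card_ker_twist_cover (leq_trans _ (leq_mul cardD (leqnn _))) //.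
  by rewrite mulnAC -mulnA leq_mul2l leR orbT.
have := schur_cover_der_le hcov im_twist_cover ker_twist_cover_cent
  der_twist_sub_ker sLK tiLD leKD.
move/(leq_trans cardD); rewrite -{2}[#|'ker f|]muln1 leq_pmul2l ?cardG_gt0 //.
move=> le1; have /eqP : #[x] = 1%N by apply/eqP; rewrite eqn_leq le1 order_gt0.
by rewrite order_eq1 => /eqP [].
Qed.

Lemma der_twist_central_eq0_prime (L : {group T}) q s :
    prime q -> (s *+ q = 0)%R ->
    L \subset 'ker twist_cover -> L :&: [set: T]^`(1) = 1 ->
    ((1%g, s) : T) \in [set: T]^`(1) -> (#|R| <= #|L| * q)%N ->
  s = 0%R.
Proof.
move=> q_pr sq0 sLK tiLD Dx leR.
have : #[(1%g, s) : T] %| q.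
  by rewrite order_dvdn twist_ker_expg ?morph1 // expg1n sq0.
case/primeP: q_pr => _ /[apply] /orP[| /eqP oq]; last first.
  by apply: (der_twist_central_eq0 sLK tiLD Dx); rewrite oq.
by rewrite order_eq1 => /eqP [].
Qed.

Lemma der_twist_central_expp_eq0 p s :
    prime p -> #|R| = (p * p)%N -> (s *+ (p * p) = 0)%R ->
    ((1%g, s) : T) \in [set: T]^`(1) ->
  (s *+ p = 0)%R.
Proof.
move=> p_pr cardR spp Ds.
have : #[(1%g, s) : T] %| p ^ 2.
  by rewrite order_dvdn twist_ker_expg ?morph1 // expg1n -mulnn spp.
case/(dvdn_pfactor _ _ p_pr)=> m; rewrite leq_eqVlt ltnS => /orP[/eqP -> os | m1 os].
  suff -> : s = 0%R by rewrite mul0rn.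
  apply: (der_twist_central_eq0 (L := 1%G)); rewrite ?sub1G ?setI1g //.
  by rewrite cards1 mul1n os cardR mulnn.
have : #[(1%g, s) : T] %| p by rewrite os -{2}(expn1 p) dvdn_exp2l.
by rewrite order_dvdn twist_ker_expg ?morph1 // expg1n => /eqP [].
Qed.

Lemma twist_commg_lifts (X Y : hT) : X \in H -> Y \in H ->
  [~ ((subg H X, 0%R) : T), (subg H Y, 0%R)]
  = ([~ subg H X, subg H Y], (lam (f X) * mu (f Y) - lam (f Y) * mu (f X))%R).
Proof. by move=> HX HY; rewrite twist_commg /bilinear_twist_val /= !subgK. Qed.

Lemma lifts_commute_wedge p x y :
    prime p -> #|R| = p -> (p%:R = 0 :> R)%R ->
    x \in G -> y \in G -> lifts_commute f x y ->
  (lam x * mu y = lam y * mu x)%R.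
Proof.
move=> p_pr cardR charR /(stem_ext_preim hstem)[X HX <-].
case/(stem_ext_preim hstem)=> Y HY <- cxy; apply/eqP; rewrite -subr_eq0; apply/eqP.
have cXY : [~ subg H X, subg H Y] = 1.
  have /commgP/eqP cXY1 : commute X Y by apply: (cxy X Y).
  by rewrite -(morphR (subg_morphism H)) // cXY1 morph1.
apply: (der_twist_central_eq0_prime (L := 1%G) p_pr) => //.
- by rewrite -mulr_natr charR mulr0.
- exact: sub1G.
- exact: setI1g.
- by rewrite -cXY -twist_commg_lifts // mem_commg ?inE.
- by rewrite cards1 mul1n cardR.
Qed.

Lemma lifts_commuteX_wedge p x y :
    prime p -> #|R| = (p * p)%N -> ((p * p)%:R = 0 :> R)%R ->
    x \in G -> y \in G -> lifts_commute f (x ^+ p) y ->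
  ((lam x * mu y - lam y * mu x) *+ p = 0)%R.
Proof.
move=> p_pr cardR charR /(stem_ext_preim hstem)[X HX <-].
case/(stem_ext_preim hstem)=> Y HY <- cxy.
set t := (_ - _)%R; set k := [~ subg H X, subg H Y].
set D := [set: T]^`(1).
have kXY : [~ X, Y] \in 'ker f := stem_ext_commg_ker hstem abG HX HY.
have ek : k = subg H [~ X, Y] by rewrite /k -(morphR (subg_morphism H)).
have fk1 : fs k = 1 by rewrite ek /= subgK ?groupR ?(mker kXY).
have kp1 : k ^+ p = 1.
  rewrite ek -morphX ?groupR // -commXg; last first.
    exact (stem_ext_ker_cent hstem HX kXY).
  have /commgP/eqP -> : commute (X ^+ p) Y.
    by apply: (cxy (X ^+ p) Y); rewrite ?groupX // morphX.
  exact: morph1.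
have Dkt : ((k, t) : T) \in D by rewrite -twist_commg_lifts // mem_commg ?inE.
have tpp : (t *+ (p * p) = 0)%R by rewrite -mulr_natr charR mulr0.
(* Either (1, t) lies in T^`(1), or <[(k, 0)]> has order p and meets T^`(1)
   trivially, and then (1, t *+ p) = (k, t) ^+ p lies in T^`(1). *)
have [Dk | nDk] := boolP (((k, 0%R) : T) \in D).
  have Dt : ((1%g, t) : T) \in D.
    have -> : ((1%g, t) : T) = ((k, 0%R) : T)^-1 * (k, t).
      apply: (@mulgI _ ((k, 0%R) : T)); rewrite mulKVg cext_mulE /= mulg1 add0r.
      by rewrite /bilinear_twist_val morph1 (morph_add1 muM) mulr0 addr0.
    by rewrite groupM ?groupV.
  exact: der_twist_central_expp_eq0 p_pr cardR tpp Dt.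
have ok : #[(k, 0%R) : T] = p.
  apply: nt_prime_order => //; first by rewrite twist_ker_expg // kp1 mul0rn.
  by apply: contraNneq nDk => ->; apply: group1.
apply: (der_twist_central_eq0_prime (L := <[(k, 0%R) : T]>%G) p_pr).
- by rewrite -mulrnA tpp.
- by rewrite cycle_subG; apply/kerP; rewrite ?inE.
- by apply: prime_TIg; rewrite ?cycle_subG // -orderE ok.
- by rewrite -kp1 -twist_ker_expg // groupX.
- by rewrite /= -orderE ok cardR.
Qed.

End BilinearTwist.

Definition cyclic_log (gT : finGroupType) (a x : gT) : nat :=
  index x (mkseq (fun i => a ^+ i) #[a]).

Lemma cyclic_logK (gT : finGroupType) (a x : gT) :
  x \in <[a]> -> a ^+ cyclic_log a x = x.
Proof.
case/cyclePmin=> i lt_i_a ->; rewrite /cyclic_log; set s := mkseq _ _.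
have ai : a ^+ i \in s by apply/mapP; exists i; rewrite // mem_iota.
have lt_idx : index (a ^+ i) s < #[a].
  by rewrite -[#[a] in X in _ < X](size_mkseq (fun i => a ^+ i)) index_mem.
by have := nth_index 1 ai; rewrite nth_mkseq.
Qed.

Lemma natr_mod (R : nzRingType) m n : (m%:R = 0 :> R)%R -> ((n %% m)%:R = n%:R :> R)%R.
Proof. by move=> charR; rewrite {2}(divn_eq n m) natrD natrM charR mulr0 add0r. Qed.

Section CyclicCoordinate.

Variables (gT : finGroupType) (R : nzRingType) (m : nat) (a : gT).
Variables (B G : {group gT}).
Hypotheses (defG : <[a]> \x B = G) (m_dvd_a : m %| #[a]) (charR : (m%:R = 0 :> R)%R).

Definition cyclic_coord (x : gT) : R := ((cyclic_log a (divgr <[a]> B x))%:R)%R.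

Lemma cyclic_log_expg n : ((cyclic_log a (a ^+ n))%:R = n%:R :> R)%R.
Proof.
have /eqP := cyclic_logK (mem_cycle a n); rewrite eq_expg_mod_order => /eqP eqmod.
rewrite -(natr_mod _ charR) -[in RHS](natr_mod _ charR) -(modn_dvdm _ m_dvd_a).
by rewrite eqmod modn_dvdm.
Qed.

Lemma cyclic_coordX n : cyclic_coord (a ^+ n) = (n%:R)%R.
Proof. by rewrite /cyclic_coord divgr_id ?mem_cycle // cyclic_log_expg. Qed.

Lemma cyclic_coord_eq0 x : x \in B -> cyclic_coord x = 0%R.
Proof.
move=> Bx; have [_ _ _ tiAB] := dprodP defG.
have divx1 : divgr <[a]> B x = 1 by rewrite /divgr remgr_id // mulgV.
have := cyclic_coordX 0; rewrite /cyclic_coord divgr_id ?mem_cycle // expg0.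
by rewrite divx1.
Qed.

Lemma cyclic_coordM : {in G &, {morph cyclic_coord : x y / x * y >-> (x + y)%R}}.
Proof.
have [_ defAB cAB tiAB] := dprodP defG.
have complB : B \in [complements to <[a]> in G] by apply/complP; split.
move=> x y Gx Gy; rewrite /cyclic_coord (divgrM complB cAB) //.
have Ax : divgr <[a]> B x \in <[a]> by apply: mem_divgr; rewrite defAB.
have Ay : divgr <[a]> B y \in <[a]> by apply: mem_divgr; rewrite defAB.
by rewrite -{1}(cyclic_logK Ax) -{1}(cyclic_logK Ay) -expgD cyclic_log_expg natrD.
Qed.

End CyclicCoordinate.

Lemma remgr_dprodM (gT : finGroupType) (A B G : {group gT}) :
  A \x B = G -> {in G &, {morph remgr A B : x y / x * y}}.
Proof.
move=> defG; have [_ defAB _ tiAB] := dprodP defG.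
by apply: remgrM; [apply/complP | case: (dprod_normal2 defG)].
Qed.

Lemma abelem_coord_neq0 (gT : finGroupType) p (E : {group gT}) e :
    p.-abelem E -> e \in E -> e != 1 ->
  exists2 mu : gT -> 'F_p,
    {in E &, {morph mu : x y / x * y >-> (x + y)%R}} & mu e != 0%R.
Proof.
move=> pE Ee ne1; have ntE : E :!=: 1 by apply/trivgPn; exists e.
set rv := abelem_rV pE ntE.
have rv_e : rv e != 0%R.
  apply: contra ne1 => /eqP rv_e0; apply/eqP.
  apply: (@abelem_rV_inj _ _ _ pE ntE e 1 Ee (group1 E)).
  by rewrite -/rv rv_e0 /rv abelem_rV_1.
have [i rv_ei] : exists i, rv e 0%R i != 0%R.
  apply/existsP; apply: contraR rv_e => /existsPn rv0.
  by apply/eqP/rowP=> j; rewrite mxE; apply/eqP/negbNE/rv0.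
exists (fun x => rv x 0%R i) => // x y Ex Ey /=.
by rewrite /rv abelem_rV_M // mxE.
Qed.

Section CyclicTimesElementary.

Variables (gT hT : finGroupType) (G : {group gT}) (H : {group hT}).
Variable f : {morphism H >-> gT}.
Hypotheses (hcov : schur_cover G f) (abG : abelian G).
Variables (p : nat) (a : gT) (E : {group gT}).
Hypotheses (p_pr : prime p) (defG : <[a]> \x E = G).
Hypotheses (p_dvd_a : p %| #[a]) (pE : p.-abelem E).

Let hstem : stem_ext G f := hcov.1.

Let sAG : <[a]> \subset G.
Proof. by rewrite -(dprodW defG) mulG_subl. Qed.

Let sEG : E \subset G.
Proof. by rewrite -(dprodW defG) mulG_subr. Qed.

Let Ga : a \in G.
Proof. by rewrite -cycle_subG. Qed.

Let remgr_mem y : y \in G -> remgr <[a]> E y \in E.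
Proof. by rewrite -{1}(dprodW defG); apply: mem_remgr. Qed.

Let divgr_mem y : y \in G -> divgr <[a]> E y \in <[a]>.
Proof. by rewrite -{1}(dprodW defG); apply: mem_divgr. Qed.

Lemma not_lifts_commute_cycle m y :
  ~~ (p %| m) -> y \in G -> y \notin <[a]> -> ~ lifts_commute f (a ^+ m) y.
Proof.
move=> p_m Gy nAy cy; have [_ _ _ tiAE] := dprodP defG.
have ne1 : remgr <[a]> E y != 1.
  by apply: contra nAy => /eqP e1; rewrite (divgr_eq <[a]> E y) e1 mulg1 divgr_mem.
have [mu muM mu_e] := abelem_coord_neq0 pE (remgr_mem Gy) ne1.
have charFp : (p%:R = 0 :> 'F_p)%R by apply/pcharf0/pchar_Fp.
have lamM := cyclic_coordM defG p_dvd_a charFp.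
have mueM : {in G &, {morph mu \o remgr <[a]> E : x y / x * y >-> (x + y)%R}}.
  by move=> x z Gx Gz /=; rewrite (remgr_dprodM defG) // muM ?remgr_mem.
have := lifts_commute_wedge hcov abG lamM mueM p_pr (card_Fp p_pr) charFp
  (groupX m Ga) Gy cy.
rewrite /= (remgr1 _ (mem_cycle a m)) (morph_add1 muM) mulr0.
rewrite (cyclic_coordX E p_dvd_a charFp).
by apply/eqP; rewrite mulf_neq0 // -(dvdn_pcharf (pchar_Fp p_pr)).
Qed.

Lemma expp_mem_cycle w : w \in G -> w ^+ p \in <[a]>.
Proof.
move=> Gw; have /abelemP[// | _ expE] := pE.
rewrite (divgr_eq <[a]> E w) expgMn; last first.
  by apply: (centsP abG); [apply: (subsetP sAG) | apply: (subsetP sEG)];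
    rewrite ?divgr_mem ?remgr_mem.
by rewrite (expE (remgr <[a]> E w)) ?remgr_mem // mulg1 groupX ?divgr_mem.
Qed.

Lemma dominant_cycle_expp k : dominant G f (a ^+ (k * p)).
Proof.
apply/(dominantP hstem); split=> [|w Gw]; first exact: groupX.
apply: lifts_commute_sym; rewrite expgM.
apply: (lifts_commute_moveX hstem abG Gw (groupX k Ga)).
by have /cycleP[j ->] := expp_mem_cycle Gw; apply: (lifts_commuteX hstem).
Qed.

Lemma lifts_commute_nondominant_cycle x y :
    x \in nondominant G f -> x \in <[a]> -> y \in G -> lifts_commute f x y ->
  y \in <[a]>.
Proof.
rewrite inE => /andP[_ ndx] /cycleP[m defx] Gy cxy; apply/negPn/negP => nAy.
apply: (not_lifts_commute_cycle (m := m) _ Gy nAy); last by rewrite -defx.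
by apply: contra ndx => /dvdnP[k km]; rewrite defx km dominant_cycle_expp.
Qed.

Lemma reduced_disconnected_cycle_abelem : E :!=: 1 -> reduced_disconnected G f.
Proof.
case/trivgPn=> b Eb nb1; have [_ _ _ tiAE] := dprodP defG.
have Gb : b \in G by apply: (subsetP sEG).
have nAb : b \notin <[a]>.
  by apply: contra nb1 => Ab; apply/eqP/set1gP; rewrite -tiAE inE Ab.
have not_p1 : ~~ (p %| 1) by rewrite dvdn1 neq_ltn (prime_gt1 p_pr) orbT.
have ncab := not_lifts_commute_cycle not_p1 Gb nAb; rewrite expg1 in ncab.
have nda : a \in nondominant G f.
  by rewrite inE Ga; apply/negP=> /(dominantP hstem)[_ /(_ b Gb)].
have ndb : b \in nondominant G f.
  rewrite inE Gb; apply/negP=> /(dominantP hstem)[_ /(_ a Ga)].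
  by move/lifts_commute_sym.
exists a, b; split=> //; apply/negP=> cab.
suff clA : closed (reduced_rel G f) <[a]>.
  by have := closed_connect clA cab; rewrite cycle_id (negbTE nAb).
move=> x y /and3P[ndx ndy /(deep_adjP hstem)[Gx Gy _ cxy]]; apply/idP/idP => Ax.
  exact: lifts_commute_nondominant_cycle cxy.
exact: lifts_commute_nondominant_cycle (lifts_commute_sym cxy).
Qed.

End CyclicTimesElementary.

Lemma connect_nondominant_expp (gT hT : finGroupType) (G : {group gT})
    (H : {group hT}) (f : {morphism H >-> gT}) (p : nat) (a x : gT) :
    stem_ext G f -> abelian G -> p.-group G -> a \in G ->
    a ^+ p \in nondominant G f -> x \in nondominant G f ->
  connect (reduced_rel G f) x (a ^+ p).
Proof.
move=> hstem abG pG Ga ndz ndx; have Gx : x \in G by case/setIdP: ndx.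
have [k ox] := p_natP (mem_p_elt pG Gx).
have : x ^+ (p ^ k) = 1 by rewrite -ox expg_order.
elim: k x ndx {Gx ox} => [|k IHk] x ndx xpk.
  by move: ndx; rewrite expn0 expg1 in xpk; rewrite xpk inE (dominant1 hstem) andbF.
have Gx : x \in G by case/setIdP: ndx.
have [/(dominantP hstem)[_ cxp] | ndxp] := boolP (dominant G f (x ^+ p)).
  apply: (connect_lifts_commute hstem) => //.
  exact: (lifts_commute_moveX hstem abG Gx Ga (cxp a Ga)).
have ndxp' : x ^+ p \in nondominant G f by rewrite inE groupX.
apply: connect_trans (IHk _ ndxp' _); last by rewrite -expgM -expnS.
apply: (connect_lifts_commute hstem) => //.
by rewrite -{1}(expg1 x); apply: (lifts_commuteX hstem).
Qed.

Lemma nondominant_expp_two_cycles (gT hT : finGroupType) (G : {group gT})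
    (H : {group hT}) (f : {morphism H >-> gT}) (p : nat) (a b : gT)
    (E E2 : {group gT}) :
    schur_cover G f -> abelian G -> prime p ->
    <[a]> \x E = G -> <[b]> \x E2 = E -> p * p %| #[a] -> p * p %| #[b] ->
  a ^+ p \in nondominant G f.
Proof.
move=> hcov abG p_pr defG defE pa pb.
have [_ _ _ tiAE] := dprodP defG.
have sEG : E \subset G by rewrite -(dprodW defG) mulG_subr.
have Ga : a \in G by rewrite -cycle_subG -(dprodW defG) mulG_subl.
have Eb : b \in E by rewrite -cycle_subG -(dprodW defE) mulG_subl.
have Gb := subsetP sEG b Eb.
have p2_gt1 : 1 < p * p by rewrite (leq_trans (prime_gt1 p_pr)) // leq_pmulr ?prime_gt0.
have charR : ((p * p)%:R = 0 :> 'Z_(p * p))%R by apply: pchar_Zp.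
have cardR : #|'Z_(p * p)| = (p * p)%N by rewrite card_ord Zp_cast.
have lamM := cyclic_coordM defG pa charR.
have muM : {in G &, {morph cyclic_coord 'Z_(p * p) b E2 \o remgr <[a]> E :
    x y / x * y >-> (x + y)%R}}.
  move=> x y Gx Gy /=; rewrite (remgr_dprodM defG) // (cyclic_coordM defE pb charR) //.
    by apply: mem_remgr; rewrite (dprodW defG).
  by apply: mem_remgr; rewrite (dprodW defG).
rewrite inE groupX //; apply/negP=> /(dominantP hcov.1)[_ /(_ b Gb) cab].
have := lifts_commuteX_wedge hcov abG lamM muM p_pr cardR charR Ga Gb cab.
rewrite /= (cyclic_coord_eq0 defG pa charR Eb) (remgr1 _ (cycle_id a)) (remgr_id tiAE Eb).
have [coord_a coord_b] : cyclic_coord 'Z_(p * p) a E a = 1%R /\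
    cyclic_coord 'Z_(p * p) b E2 b = 1%R.
  rewrite -{2}(expg1 a) -{2}(expg1 b).
  by rewrite (cyclic_coordX E pa charR) (cyclic_coordX E2 pb charR).
rewrite (cyclic_coord_eq0 defE pb charR (group1 E2)) coord_a coord_b.
rewrite mul0r subr0 mulr1 => /(congr1 val); rewrite /= val_Zp_nat //.
by rewrite modn_small ?ltn_Pmull ?prime_gt0 ?prime_gt1 // => p0; rewrite p0 in p_pr.
Qed.

Lemma reduced_connected_two_cycles (gT hT : finGroupType) (G : {group gT})
    (H : {group hT}) (f : {morphism H >-> gT}) (p : nat) (a b : gT)
    (E E2 : {group gT}) :
    schur_cover G f -> abelian G -> prime p -> p.-group G ->
    <[a]> \x E = G -> <[b]> \x E2 = E -> p * p %| #[a] -> p * p %| #[b] ->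
  ~ reduced_disconnected G f.
Proof.
move=> hcov abG p_pr pG defG defE pa pb [u [v [ndu ndv /negP]]]; apply.
have ndz := nondominant_expp_two_cycles hcov abG p_pr defG defE pa pb.
have Ga : a \in G by rewrite -cycle_subG -(dprodW defG) mulG_subl.
have hub := connect_nondominant_expp hcov.1 abG pG Ga ndz.
apply: connect_trans (hub _ ndu) _.
by rewrite (sym_connect_sym (reduced_rel_sym hcov.1)) hub.
Qed.

Lemma bigdprod_cycle_exponent (gT : finGroupType) (s : seq gT) (K : {group gT}) n :
  \big[dprod/1]_(x <- s) <[x]> = K -> all (fun x => #[x] %| n) s ->
  exponent K %| n.
Proof.
elim: s K => [|x s IHs] K; first by rewrite big_nil => <- _; rewrite exponent1.
rewrite big_cons => defK /andP[xn sn].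
have [[_ K' _ defK'] _ _ _] := dprodP defK; rewrite defK' in defK.
by rewrite -(dprod_exponent defK) dvdn_lcm exponent_cycle xn (IHs K').
Qed.

Lemma abelian_type_decomposition (gT : finGroupType) (G : {group gT})
    (p r1 r2 : nat) (rs : seq nat) :
    abelian G -> abelian_type G = [seq (p ^ ri)%N | ri <- [:: r1, r2 & rs]] ->
    sorted geq [:: r1, r2 & rs] ->
  exists a b (E E2 : {group gT}), [/\ <[a]> \x E = G, <[b]> \x E2 = E,
    #[a] = (p ^ r1)%N, #[b] = (p ^ r2)%N & exponent E %| (p ^ r2)%N].
Proof.
move=> abG typeG /= /andP[_ sorted_rs].
have [s defG] := abelian_structure abG; rewrite typeG.
case: s defG => [|a [|b s]] //= defG [oa ob os]; rewrite !big_cons in defG.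
have [[_ E _ defE] _ _ _] := dprodP defG; rewrite defE in defG.
have [[_ E2 _ defE2] _ _ _] := dprodP defE; rewrite defE2 in defE.
exists a, b, E, E2; split=> //.
rewrite -(dprod_exponent defE) dvdn_lcm exponent_cycle ob dvdnn.
apply: (bigdprod_cycle_exponent defE2); apply/allP=> x sx.
have /mapP[ri rs_ri ->] : #[x] \in [seq (p ^ ri)%N | ri <- rs] by rewrite -os map_f.
rewrite dvdn_exp2l //; apply: (allP (order_path_min _ sorted_rs)) rs_ri.
by move=> i j k le_ji le_kj; apply: leq_trans le_kj le_ji.
Qed.

Theorem theorem4p6 (gT : finGroupType) (G : {group gT}) (p : nat) (r : seq nat)
    (hp : prime p) (hab : abelian G)
    (htype : abelian_type G = [seq (p ^ ri)%N | ri <- r])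
    (hsort : sorted geq r) (hpos : all (fun ri => 0 < ri)%N r)
    (hk : (2 <= size r)%N) (hnc : ~~ cyclic G)
    (hT : finGroupType) (H : {group hT}) (f : {morphism H >-> gT})
    (hcov : schur_cover G f) :
  reduced_disconnected G f <-> nth 0%N r 1 = 1%N.
Proof.
case: r htype hsort hpos hk => [|r1 [|r2 rs]] // htype hsort /and3P[r1_gt0 r2_gt0 _] _ /=.
have [a [b [E [E2 [defG defE oa ob expE]]]]] :=
  abelian_type_decomposition hab htype hsort.
have Eb : b \in E by rewrite -cycle_subG -(dprodW defE) mulG_subl.
split=> [disG | r2_1].
  apply/eqP/negPn/negP => r2_neq1.
  have r2_ge2 : 1 < r2 by rewrite ltn_neqAle eq_sym r2_neq1.
  have le_r21 : r2 <= r1 by case/andP: hsort.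
  have pG : p.-group G.
    rewrite -pnat_exponent -(dprod_exponent defG) exponent_cycle oa.
    apply: (@pnat_dvd _ (p ^ r1)); last by rewrite pnatX pnat_id.
    by rewrite dvdn_lcm dvdnn (dvdn_trans expE) ?dvdn_exp2l.
  have [pa pb] : p * p %| #[a] /\ p * p %| #[b].
    by rewrite mulnn oa ob !dvdn_exp2l // (leq_trans r2_ge2).
  exact: reduced_connected_two_cycles hcov hab hp pG defG defE pa pb disG.
apply: (reduced_disconnected_cycle_abelem hcov hab hp defG).
- by rewrite oa dvdn_exp.
- have sEG : E \subset G by rewrite -(dprodW defG) mulG_subr.
  by rewrite abelemE // (abelianS sEG hab) (dvdn_trans expE) // r2_1 expn1.
- by apply/trivgPn; exists b; rewrite // -order_gt1 ob r2_1 expn1 prime_gt1.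
Qed.
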